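(* Let $\lambda=\mathrm{diag}(\lambda_x,\lambda_y)$ with $\lambda_x,\lambda_y\in[0,1)$. Fix an index $k$ and given values $h(k)$, $v(k)$, $\omega_k\neq0$, with $\rho_k=(\rho_{xk},\rho_{yk})^T$, $D\rho_k=(D\rho_{xk},D\rho_{yk})^T$, $\eta_k=(\eta_{xk},\eta_{yk})^T:=\Phi(\theta_{k+1})-\Phi(\theta_k)$ and $\Psi=(\Psi_x,\Psi_y)^T$. Suppose $\delta_k>0$ is a root of $$\tfrac12 g\delta^2-\Big\{[D\rho_{xk}+\Psi_x(\theta_k,\omega_k)]\cot\theta_k+[D\rho_{yk}+\Psi_y(\theta_k,\omega_k)]\Big\}\delta+\Big[\eta_{xk}\cot\theta_k+\eta_{yk}+(\lambda_x-1)\rho_{xk}\cot\theta_k+(\lambda_y-1)\rho_{yk}\Big]=0,$$ define $$I_k=-\frac{m\{(\lambda_x-1)\rho_{xk}+\eta_{xk}-[D\rho_{xk}+\Psi_x(\theta_k,\omega_k)]\delta_k\}}{\delta_k\sin\theta_k},$$ assume $I_k\neq0$, and define $r_k=\dfrac{(-1)^{k+1}J\Delta\theta^*}{I_k\delta_k}-\dfrac{J\omega_k}{I_k}$. Then applying $(I_k,r_k)$ and propagating with flight time $\delta_k$ via the hybrid devil-stick dynamics yields $\theta_{k+1}=\theta_k+(-1)^{k+1}\Delta\theta^*$ (so $\delta_k$ is consistent with $\delta_k=(-1)^{k+1}\Delta\theta^*/\omega_{k+1}$, $\omega_{k+1}=\omega_k+I_kr_k/J$) and $\rho_{k+1}=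\lambda\rho_k$.
   Context: Fix constants $m,J,g>0$, $\alpha,\beta>0$, and angles $\theta^{\mathrm{odd}}\in(0,\pi/2)$, $\theta^{\mathrm{even}}\in(\pi/2,\pi)$; set $\Delta\theta^*=\theta^{\mathrm{even}}-\theta^{\mathrm{odd}}>0$. For $k=1,2,\dots$ put $\theta_k=\theta^{\mathrm{odd}}$ if $k$ is odd and $\theta_k=\theta^{\mathrm{even}}$ if $k$ is even, so $\theta_{k+1}=\theta_k+(-1)^{k+1}\Delta\theta^*$ and $\theta_{k+2}=\theta_k$. The hybrid devil-stick dynamics consist of states $h(k)\in\mathbb{R}^2$, $v(k)\in\mathbb{R}^2$, $\omega_k\in\mathbb{R}\setminus\{0\}$, inputs $I_k,r_k\in\mathbb{R}$ and times of flight $\delta_k>0$ satisfying, for all $k\ge1$, $$h(k+1)=h(k)+v(k)\delta_k+\begin{bmatrix}-\sin\theta_k\\ \cos\theta_k\end{bmatrix}\frac{I_k\delta_k}{m}+\begin{bmatrix}0\\-\tfrac12 g\delta_k^2\end{bmatrix},\qquad v(k+1)=v(k)+\begin{bmatrix}-\sin\theta_k\\ \cos\theta_k\end{bmatrix}\frac{I_k}{m}+\begin{bmatrix}0\\-g\delta_k\end{bmatrix},$$ $$\omega_{k+1}=\omega_k+\frac{I_kr_k}{J},\qquad \theta_{k+1}=\theta_k+\omega_{k+1}\delta_k,$$ so that $\delta_k=(-1)^{k+1}\Delta\theta^*/\omega_{k+1}$. Define $\Phi(\theta)=(\alpha\tan\theta,\ \beta)^T$ and $$\Psi(\theta_k,\omega_k)=\begin{bmatrix}\dfrac{(-1)^k\omega_k\alpha}{\Delta\theta^*}(\tan\theta_k-\tan\theta_{k+1})\\[2mm]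 -\dfrac{(-1)^k g\Delta\theta^*}{2\omega_k}\end{bmatrix},$$ and $\rho_k=h(k)-\Phi(\theta_k)$, $D\rho_k=v(k)-\Psi(\theta_k,\omega_k)$. *)

From Stdlib Require Import Reals Lra.
Open Scope R_scope.

Definition theta_seq (th_odd th_even : R) (k : nat) : R :=
  if Nat.odd k then th_odd else th_even.

Definition dtheta (th_odd th_even : R) : R := th_even - th_odd.

Definition cot (x : R) : R := cos x / sin x.

Definition Phi_x (alpha th : R) : R := alpha * tan th.
Definition Phi_y (beta : R) (th : R) : R := beta.

(* Psi(theta_k, omega_k), written with the index k *)
Definition Psi_x (alpha th_odd th_even : R) (k : nat) (w : R) : R :=
  (-1) ^ k * w * alpha / dtheta th_odd th_even *
    (tan (theta_seq th_odd th_even k) - tan (theta_seq th_odd th_even (S k))).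
Definition Psi_y (g th_odd th_even : R) (k : nat) (w : R) : R :=
  - ((-1) ^ k * g * dtheta th_odd th_even / (2 * w)).

(* The spin impulse r_k is chosen so that omega_(k+1) delta_k = (-1)^(k+1) Delta theta^*,
   which lands the stick on the next alternating angle.  The impulse I_k is chosen so that
   the horizontal ballistic flight moves rho_x to lambda_x rho_x; substituting it into the
   vertical flight, the quadratic satisfied by delta_k is exactly the condition that
   rho_y moves to lambda_y rho_y. *)
From Stdlib Require Import Reals Lra.
Open Scope R_scope.

Lemma theta_seq_S (a b : R) (k : nat) :
  theta_seq a b (S k) = theta_seq a b k + (-1) ^ (S k) * dtheta a b.
Proof.
  unfold dtheta; induction k as [|k IH].
  - unfold theta_seq; simpl; ring.
  - change (theta_seq a b (S (S k))) with (theta_seq a b k).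
    rewrite IH; simpl; ring.
Qed.

Lemma sin_theta_seq_gt0 (a b : R) (k : nat) :
  0 < a < PI -> 0 < b < PI -> 0 < sin (theta_seq a b k).
Proof.
  intros Ha Hb; unfold theta_seq.
  destruct (Nat.odd k); apply sin_gt_0; lra.
Qed.

Lemma spin_flight_angle (J I d w sgn D r : R) :
  J <> 0 -> I <> 0 -> d <> 0 ->
  r = sgn * J * D / (I * d) - J * w / I ->
  (w + I * r / J) * d = sgn * D.
Proof. intros HJ HI Hd ->; field; tauto. Qed.

Lemma flight_x_contracts (m s d lx px pxn hx vx I : R) :
  m <> 0 -> s <> 0 -> d <> 0 ->
  I = - (m * ((lx - 1) * (hx - px) + (pxn - px) - vx * d)) / (d * s) ->
  hx + vx * d + (- s) * I * d / m - pxn = lx * (hx - px).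
Proof. intros Hm Hs Hd ->; field; tauto. Qed.

Lemma flight_y_contracts (m s c g d lx ly px pxn py pyn hx hy vx vy I : R) :
  m <> 0 -> s <> 0 -> d <> 0 ->
  1 / 2 * g * d ^ 2 - (vx * (c / s) + vy) * d
    + ((pxn - px) * (c / s) + (pyn - py)
       + (lx - 1) * (hx - px) * (c / s) + (ly - 1) * (hy - py)) = 0 ->
  I = - (m * ((lx - 1) * (hx - px) + (pxn - px) - vx * d)) / (d * s) ->
  hy + vy * d + c * I * d / m - 1 / 2 * g * d ^ 2 - pyn = ly * (hy - py).
Proof.
  intros Hm Hs Hd Hq ->.
  apply (Rmult_eq_reg_l s); [|exact Hs].
  match type of Hq with ?Q = 0 =>
    replace (s * (ly * (hy - py))) with (s * (ly * (hy - py)) - s * Q)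
      by (rewrite Hq; ring)
  end.
  field; tauto.
Qed.

Theorem mainTheorem7
  (m J g alpha beta th_odd th_even : R)
  (hm : 0 < m) (hJ : 0 < J) (hg : 0 < g) (halpha : 0 < alpha) (hbeta : 0 < beta)
  (hodd : 0 < th_odd < PI / 2) (heven : PI / 2 < th_even < PI)
  (lx ly : R) (hlx : 0 <= lx < 1) (hly : 0 <= ly < 1)
  (k : nat) (hk : (1 <= k)%nat)
  (hx hy vx vy w : R) (hw : w <> 0)
  (delta I r : R)
  (hxn hyn vxn vyn wn : R) :
  let th := theta_seq th_odd th_even k in
  let thn := theta_seq th_odd th_even (S k) in
  let rx := hx - Phi_x alpha th in
  let ry := hy - Phi_y beta th in
  let Drx := vx - Psi_x alpha th_odd th_even k w in
  let Dry := vy - Psi_y g th_odd th_even k w in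
  let etax := Phi_x alpha thn - Phi_x alpha th in
  let etay := Phi_y beta thn - Phi_y beta th in
  0 < delta ->
  1 / 2 * g * delta ^ 2
    - ((Drx + Psi_x alpha th_odd th_even k w) * cot th
       + (Dry + Psi_y g th_odd th_even k w)) * delta
    + (etax * cot th + etay + (lx - 1) * rx * cot th + (ly - 1) * ry) = 0 ->
  I = - (m * ((lx - 1) * rx + etax - (Drx + Psi_x alpha th_odd th_even k w) * delta))
        / (delta * sin th) ->
  I <> 0 ->
  r = (-1) ^ (S k) * J * dtheta th_odd th_even / (I * delta) - J * w / I ->
  (* hybrid dynamics from step k to k+1 *)
  hxn = hx + vx * delta + (- sin th) * I * delta / m ->
  hyn = hy + vy * delta + cos th * I * delta / m - 1 / 2 * g * delta ^ 2 ->
  vxn = vx + (- sin th) * I / m ->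
  vyn = vy + cos th * I / m - g * delta ->
  wn = w + I * r / J ->
  th + wn * delta = th + (-1) ^ (S k) * dtheta th_odd th_even
  /\ th + wn * delta = thn
  /\ hxn - Phi_x alpha thn = lx * rx
  /\ hyn - Phi_y beta thn = ly * ry.
Proof.
  intros th thn rx ry Drx Dry etax etay Hd Hq HI HI0 Hr Hhx Hhy _ _ Hwn.
  assert (Hs : sin th <> 0).
  { apply Rgt_not_eq, sin_theta_seq_gt0; lra. }
  assert (Hvx : Drx + Psi_x alpha th_odd th_even k w = vx) by (unfold Drx; ring).
  assert (Hvy : Dry + Psi_y g th_odd th_even k w = vy) by (unfold Dry; ring).
  rewrite Hvx, Hvy in *; unfold cot in Hq.
  assert (Hangle : th + wn * delta = th + (-1) ^ (S k) * dtheta th_odd th_even).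
  { rewrite Hwn, (spin_flight_angle J I delta w ((-1) ^ S k) (dtheta th_odd th_even) r);
    [reflexivity | lra | exact HI0 | lra | exact Hr]. }
  split; [exact Hangle|]; split; [rewrite Hangle; symmetry; apply theta_seq_S|].
  split; [rewrite Hhx | rewrite Hhy].
  - apply (flight_x_contracts m (sin th) delta lx
      (Phi_x alpha th) (Phi_x alpha thn) hx vx I);
      first [lra | exact Hs | exact HI].
  - apply (flight_y_contracts m (sin th) (cos th) g delta lx ly
      (Phi_x alpha th) (Phi_x alpha thn) (Phi_y beta th) (Phi_y beta thn) hx hy vx vy I);
      first [lra | exact Hs | exact Hq | exact HI].
Qed.
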